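(* Let $a_k=2^k+1$ for $k\ge1$, and $S_n(\omega)=\sum_{k=1}^n\cos(2\pi a_k\omega)$, $\omega\in[0,1]$, viewed as a random variable on $[0,1]$ with Lebesgue measure. Then $\kappa_m(S_n)=0$ for every odd $m\ge1$ and every $n\ge1$, and $$\kappa_2(S_n)=\frac n2\ \ (n\ge1),\qquad \kappa_4(S_n)=\frac{-3n+28}{8}\ \ (n\ge4),\qquad \kappa_6(S_n)=\frac{45n^2+380n-1875}{16}\ \ (n\ge7).$$
   Context: For a bounded random variable $X$, its $m$-th cumulant is $\kappa_m(X)=\frac{d^m}{dt^m}\log\mathbb E[e^{tX}]\big|_{t=0}$. *)

From Stdlib Require Import Reals.
From Coquelicot Require Import Coquelicot.
Open Scope R_scope.

Definition a (k : nat) : R := 2 ^ k + 1.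

Fixpoint S (n : nat) (w : R) : R :=
  match n with
  | O => 0
  | Datatypes.S n' => S n' w + cos (2 * PI * a n * w)
  end.

(* moment generating function of S_n under Lebesgue measure on [0,1]:
   E[exp(t S_n)] = int_0^1 exp(t S_n(w)) dw  (S_n is continuous, so the
   Riemann integral coincides with the Lebesgue integral) *)
Definition mgf (n : nat) (t : R) : R := RInt (fun w => exp (t * S n w)) 0 1.

Definition kappa (m n : nat) : R := Derive_n (fun t => ln (mgf n t)) m 0.

(* The cumulants are the derivatives at [0] of [ln M], where [M t = ∫_0^1 exp (t S_n)]. Leibniz's
   rule applied to [M' = M (ln M)'] gives the recursion [μ_(k+1) = Σ_j C(k,j) μ_j κ_(k+1-j)] between
   the moments [μ_k = M^(k)(0)] and the cumulants, so the odd cumulants vanish with the odd moments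
   and [κ_2], [κ_4], [κ_6] are polynomials in [μ_2], [μ_4], [μ_6].

   Expanding products of cosines, [μ_k = N_n(k) / 2^k], where [N_n(k)] counts the walks of [k]
   steps in [{±a_1, ..., ±a_n}] from [0] back to [0]. Write a position as [u 2^(n+1) + r] with [r]
   small: the steps [±a_(n+1) = ±(2^(n+1) + 1)] move [u] and [r] by [±1], and from [|u| > 3] no
   walk of at most 6 steps in [{±a_1, ..., ±a_n}] reaches [0]. Hence the counts for [n+1] are a
   fixed linear transform of the counts for [n] on a finite window of states. Iterating it gives the
   counts for [n <= 8], and a table of polynomials in [n] that the transform maps to their own
   shifts, checked by evaluation, gives them for [n >= 8]. *)

From Stdlib Require Import Reals ZArith Lia Lra List.
From Coquelicot Require Import Coquelicot.
From Pilot Require Defs.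
Import ListNotations.
Open Scope R_scope.

Fixpoint binom (n k : nat) : Z :=
  match n, k with
  | _, O => 1
  | O, S _ => 0
  | S n, S k => (binom n k + binom n (S k))%Z
  end.

Lemma binom_0_r n : binom n 0 = 1%Z.
Proof. now destruct n. Qed.

Lemma binom_small n k : (n < k)%nat -> binom n k = 0%Z.
Proof.
  revert k; induction n as [|n IH]; intros [|k] Hk; cbn; try lia.
  rewrite !IH; lia.
Qed.

Lemma sum_f_R0_pascal (t D : nat) (h : nat -> R) :
  sum_f_R0 (fun j => IZR (binom (S t) j) * h j) (S D) =
  sum_f_R0 (fun j => IZR (binom t j) * h j) (S D) +
  sum_f_R0 (fun j => IZR (binom t j) * h (S j)) D.
Proof.
  rewrite !(decomp_sum _ (S D)) by lia; cbn [Nat.pred].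
  rewrite !binom_0_r, Rplus_assoc, <- plus_sum.
  f_equal; apply sum_eq; intros j _; cbn [binom]; rewrite plus_IZR; ring.
Qed.

Lemma sum_f_R0_pascal_row (t : nat) (h : nat -> R) :
  sum_f_R0 (fun j => IZR (binom t j) * (h j + h (S j))) t =
  sum_f_R0 (fun j => IZR (binom (S t) j) * h j) (S t).
Proof.
  rewrite sum_f_R0_pascal, tech5, binom_small by lia.
  rewrite Rmult_0_l, Rplus_0_r, <- plus_sum; apply sum_eq; intros; ring.
Qed.

Section Counting.
Local Open Scope Z_scope.

Fixpoint zsum (f : nat -> Z) (n : nat) : Z :=
  match n with O => 0 | S n => zsum f n + f n end.

Lemma zsum_ext f g n : (forall i, (i < n)%nat -> f i = g i) -> zsum f n = zsum g n.
Proof. induction n; intros H; cbn; [|rewrite IHn, H]; auto with arith. Qed.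

Lemma zsum_eq0 f n : (forall i, (i < n)%nat -> f i = 0) -> zsum f n = 0.
Proof. intros H; rewrite (zsum_ext _ (fun _ => 0)) by auto; clear H; induction n; cbn; lia. Qed.

Lemma zsum_add f g n : zsum (fun i => f i + g i) n = zsum f n + zsum g n.
Proof. induction n; cbn; lia. Qed.

Lemma zsum_mul_l c f n : zsum (fun i => c * f i) n = c * zsum f n.
Proof. induction n; cbn; lia. Qed.

Lemma zsum_swap (F : nat -> nat -> Z) m n :
  zsum (fun i => zsum (F i) m) n = zsum (fun j => zsum (fun i => F i j) n) m.
Proof.
  induction n; cbn.
  - symmetry; now apply zsum_eq0.
  - now rewrite IHn, <- zsum_add.
Qed.

Lemma IZR_zsum f k : IZR (zsum f (S k)) = sum_f_R0 (fun i => IZR (f i)) k.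
Proof.
  induction k as [|k IH]; cbn [zsum sum_f_R0] in *; rewrite plus_IZR; [now rewrite Rplus_0_l|].
  now rewrite IH.
Qed.

Lemma zsum_pascal (t D : nat) (h : nat -> Z) :
  zsum (fun j => binom (S t) j * h j) (S (S D)) =
  zsum (fun j => binom t j * h j) (S (S D)) + zsum (fun j => binom t j * h (S j)) (S D).
Proof.
  apply eq_IZR; rewrite plus_IZR, !IZR_zsum.
  rewrite !(sum_eq (fun i => IZR (_ * _)) _ _ (fun i _ => mult_IZR _ _)).
  apply (sum_f_R0_pascal t D (fun j => IZR (h j))).
Qed.

Lemma zsum_pascal_row (t : nat) (h : nat -> Z) :
  zsum (fun j => binom t j * (h j + h (S j))) (S t) = zsum (fun j => binom (S t) j * h j) (S (S t)).
Proof.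
  rewrite zsum_pascal; change (zsum ?f (S (S t))) with (zsum f (S t) + f (S t)); cbv beta.
  rewrite binom_small by lia; rewrite Z.mul_0_l, Z.add_0_r, <- zsum_add.
  apply zsum_ext; intros; ring.
Qed.

Definition aZ (k : nat) : Z := 2 ^ Z.of_nat k + 1.

Definition step_sum (n : nat) (V : Z -> Z) (c : Z) : Z :=
  zsum (fun i => V (c + aZ (S i)) + V (c - aZ (S i))) n.

Fixpoint walks (n k : nat) (c : Z) : Z :=
  match k with
  | O => if c =? 0 then 1 else 0
  | S k => step_sum n (walks n k) c
  end.

Lemma walks_far n k c : Z.of_nat k * aZ n < Z.abs c -> walks n k c = 0.
Proof.
  revert c; induction k as [|k IH]; intros c Hc; cbn [walks].
  - destruct (Z.eqb_spec c 0); lia.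
  - apply zsum_eq0; intros i Hi.
    assert (0 < aZ (S i) <= aZ n).
    { unfold aZ; split; [lia|].
      apply Z.add_le_mono_r, Z.pow_le_mono_r; lia. }
    rewrite !IH; lia.
Qed.

Lemma walks_odd n k c : Z.Odd (c + Z.of_nat k) -> walks n k c = 0.
Proof.
  revert c; induction k as [|k IH]; intros c [q Hq]; cbn [walks].
  - destruct (Z.eqb_spec c 0); lia.
  - apply zsum_eq0; intros i _.
    assert (E : aZ (S i) = 2 * 2 ^ Z.of_nat i + 1).
    { unfold aZ; rewrite Nat2Z.inj_succ, Z.pow_succ_r; lia. }
    rewrite Nat2Z.inj_succ in Hq.
    rewrite !IH; [lia | exists (q - 2 ^ Z.of_nat i - 1) | exists (q + 2 ^ Z.of_nat i)]; lia.
Qed.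

Fixpoint jumps (n : nat) (x : Z) (j m : nat) (c : Z) : Z :=
  match j with
  | O => walks n m c
  | S j => jumps n x j m (c + x) + jumps n x j m (c - x)
  end.

Lemma step_sum_jumps n x j m c : step_sum n (jumps n x j m) c = jumps n x j (S m) c.
Proof.
  revert c; induction j as [|j IH]; intros c; [reflexivity|].
  cbn [jumps]; rewrite <- !IH; unfold step_sum; rewrite <- zsum_add.
  apply zsum_ext; intros i _; set (y := aZ (S i)).
  replace (c + y + x) with (c + x + y) by ring; replace (c + y - x) with (c - x + y) by ring;
  replace (c - y + x) with (c + x - y) by ring; replace (c - y - x) with (c - x - y) by ring.
  ring.
Qed.

Lemma jumps_binomial n x j m c :
  jumps n x j m c =
  zsum (fun p => binom j p * walks n m (c + (2 * Z.of_nat p - Z.of_nat j) * x)) (S j).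
Proof.
  revert c; induction j as [|j IH]; intros c; cbn [jumps].
  - cbn [zsum binom]; rewrite Z.add_0_l, Z.mul_1_l; f_equal; lia.
  - rewrite !IH, Z.add_comm, <- zsum_pascal_row, <- zsum_add.
    apply zsum_ext; intros p _; rewrite <- Z.mul_add_distr_l, !Nat2Z.inj_succ; do 3 f_equal; ring.
Qed.

Lemma walks_succ_jumps n k c :
  walks (S n) k c = zsum (fun j => binom k j * jumps n (aZ (S n)) j (k - j) c) (S k).
Proof.
  set (x := aZ (S n)); revert c; induction k as [|k IH]; intros c.
  { cbn; now destruct (c =? 0). }
  transitivity (zsum (fun j => binom k j * jumps n x j (S (k - j)) c) (S k)
                + zsum (fun j => binom k j * jumps n x (S j) (k - j) c) (S k)).
  - cbn [walks]; unfold step_sum at 1; change (zsum ?f (S n)) with (zsum f n + f n); f_equal.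
    + rewrite (zsum_ext _ (fun i => zsum (fun j => binom k j *
          (jumps n x j (k - j) (c + aZ (S i)) + jumps n x j (k - j) (c - aZ (S i)))) (S k))).
      * rewrite zsum_swap; apply zsum_ext; intros j _.
        now rewrite zsum_mul_l, <- step_sum_jumps.
      * intros i _; rewrite !IH, <- zsum_add; apply zsum_ext; intros; ring.
    + cbv beta; fold x; rewrite !IH, <- zsum_add; apply zsum_ext; intros; cbn [jumps]; ring.
  - rewrite <- (zsum_pascal_row k (fun j => jumps n x j (S k - j) c)), <- zsum_add.
    apply zsum_ext; intros j Hj.
    replace (S k - j)%nat with (S (k - j)) by lia; cbn [Nat.sub]; ring.
Qed.

Lemma walks_succ n k c :
  walks (S n) k c = zsum (fun j => binom k j * zsum (fun p => binom j p *
    walks n (k - j) (c + (2 * Z.of_nat p - Z.of_nat j) * aZ (S n))) (S j)) (S k).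
Proof. rewrite walks_succ_jumps; apply zsum_ext; intros; now rewrite jumps_binomial. Qed.

Definition profile (n k : nat) (u r : Z) : Z := walks n k (u * 2 ^ Z.of_nat (S n) + r).

Definition small_state (k : nat) (u r : Z) : Prop :=
  (k <= 6)%nat /\ Z.abs u <= 3 /\ Z.abs r + Z.of_nat k <= 6.

Lemma profile_outside n k u r :
  (3 <= n)%nat -> Z.abs r + Z.of_nat k <= 6 -> 3 < Z.abs u -> profile n k u r = 0.
Proof.
  intros Hn Hr Hu; apply walks_far; unfold aZ.
  rewrite Nat2Z.inj_succ, Z.pow_succ_r by lia.
  assert (8 <= 2 ^ Z.of_nat n) by (change 8 with (2 ^ Z.of_nat 3); apply Z.pow_le_mono_r; lia).
  destruct (Z.abs_spec u), (Z.abs_spec r), (Z.abs_spec (u * (2 * 2 ^ Z.of_nat n) + r)); nia.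
Qed.

Definition truncate (V : nat -> Z -> Z -> Z) (k : nat) (u r : Z) : Z :=
  if Z.abs u <=? 3 then V k u r else 0.

Definition transfer (V : nat -> Z -> Z -> Z) (k : nat) (u r : Z) : Z :=
  zsum (fun j => binom k j * zsum (fun p => binom j p *
      truncate V (k - j) (2 * u + 2 * Z.of_nat p - Z.of_nat j) (r + 2 * Z.of_nat p - Z.of_nat j))
    (S j)) (S k).

Lemma profile_succ n k u r :
  (3 <= n)%nat -> Z.abs r + Z.of_nat k <= 6 -> profile (S n) k u r = transfer (profile n) k u r.
Proof.
  intros Hn Hr; unfold profile at 1; rewrite walks_succ.
  apply zsum_ext; intros j Hj; f_equal; apply zsum_ext; intros p Hp; f_equal.
  set (u' := 2 * u + 2 * Z.of_nat p - Z.of_nat j); set (r' := r + 2 * Z.of_nat p - Z.of_nat j).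
  replace (u * 2 ^ Z.of_nat (S (S n)) + r + (2 * Z.of_nat p - Z.of_nat j) * aZ (S n))
    with (u' * 2 ^ Z.of_nat (S n) + r')
    by (unfold u', r', aZ; rewrite (Nat2Z.inj_succ (S n)), Z.pow_succ_r by lia; ring).
  unfold truncate; destruct (Z.leb_spec (Z.abs u') 3); [reflexivity|].
  apply profile_outside; unfold r'; [lia| |lia].
  destruct (Z.abs_spec r), (Z.abs_spec (r + 2 * Z.of_nat p - Z.of_nat j)); lia.
Qed.

Lemma transfer_ext V W k u r :
  (forall k' u' r', small_state k' u' r' -> V k' u' r' = W k' u' r') ->
  small_state k u r -> transfer V k u r = transfer W k u r.
Proof.
  intros HVW (Hk & Hu & Hr); unfold transfer, truncate.
  apply zsum_ext; intros j Hj; f_equal; apply zsum_ext; intros p Hp; f_equal.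
  destruct (Z.leb_spec (Z.abs (2 * u + 2 * Z.of_nat p - Z.of_nat j)) 3); [|reflexivity].
  apply HVW; repeat split; [lia|lia|].
  destruct (Z.abs_spec r), (Z.abs_spec (r + 2 * Z.of_nat p - Z.of_nat j)); lia.
Qed.

Lemma transfer_add_scale V W (c : Z) k u r :
  transfer (fun k u r => V k u r + c * W k u r) k u r = transfer V k u r + c * transfer W k u r.
Proof.
  unfold transfer, truncate; rewrite <- zsum_mul_l, <- zsum_add; apply zsum_ext; intros j _.
  rewrite Z.mul_assoc, (Z.mul_comm c), <- Z.mul_assoc, <- (zsum_mul_l c), <- Z.mul_add_distr_l,
    <- zsum_add.
  f_equal; apply zsum_ext; intros p _; destruct (_ <=? 3); ring.
Qed.

Lemma transfer_linear (c : nat -> Z) (V : nat -> nat -> Z -> Z -> Z) D k u r :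
  transfer (fun k u r => zsum (fun d => c d * V d k u r) D) k u r =
  zsum (fun d => c d * transfer (V d) k u r) D.
Proof.
  induction D as [|D IH]; cbn [zsum].
  - unfold transfer, truncate; apply zsum_eq0; intros j _.
    rewrite zsum_eq0; [ring|]; intros p _; destruct (_ <=? 3); ring.
  - now rewrite transfer_add_scale, IH.
Qed.

Definition zrange (lo : Z) (len : nat) : list Z := map (fun i => lo + Z.of_nat i) (seq 0 len).

Lemma In_zrange lo len x : lo <= x < lo + Z.of_nat len -> In x (zrange lo len).
Proof.
  intros H; apply in_map_iff; exists (Z.to_nat (x - lo)); split; [lia|].
  apply in_seq; lia.
Qed.

Definition states : list (nat * Z * Z) :=
  flat_map (fun k => flat_map (fun u => map (fun r => (k, u, r))
    (zrange (Z.of_nat k - 6) (2 * (6 - k) + 1))) (zrange (-3) 7)) (seq 0 7).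

Lemma In_states k u r : small_state k u r -> In (k, u, r) states.
Proof.
  intros (Hk & Hu & Hr); apply in_flat_map; exists k; split; [apply in_seq; lia|].
  apply in_flat_map; exists u; split; [apply In_zrange; apply Z.abs_le in Hu; lia|].
  apply in_map; apply In_zrange; destruct (Z.abs_spec r); lia.
Qed.

Definition all_states (P : nat -> Z -> Z -> bool) : bool :=
  forallb (fun '(k, u, r) => P k u r) states.

Lemma all_states_spec P k u r : all_states P = true -> small_state k u r -> P k u r = true.
Proof. intros H Hv; exact (proj1 (forallb_forall _ _) H _ (In_states k u r Hv)). Qed.

Fixpoint lookup {A : Type} (d : A) (t : list (nat * Z * Z * A)) (k : nat) (u r : Z) : A :=
  match t with
  | [] => d
  | (k', u', r', v) :: t =>
      if (Nat.eqb k k' && Z.eqb u u' && Z.eqb r r')%bool then v else lookup d t k u r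
  end.

Definition tabulate (f : nat -> Z -> Z -> Z) : list (nat * Z * Z * Z) :=
  map (fun '(k, u, r) => (k, u, r, f k u r)) states.

Lemma lookup_tabulate f k u r : small_state k u r -> lookup 0 (tabulate f) k u r = f k u r.
Proof.
  intros Hv; generalize (In_states k u r Hv); unfold tabulate.
  induction states as [|[[k' u'] r'] l IH]; cbn; [tauto|].
  intros [E|H].
  - injection E as -> -> ->; now rewrite Nat.eqb_refl, !Z.eqb_refl.
  - destruct (Nat.eqb_spec k k'), (Z.eqb_spec u u'), (Z.eqb_spec r r'); cbn; subst; auto.
Qed.

(* The [let] makes [vm_compute] build each table once instead of once per lookup. *)
Fixpoint profile_table (m : nat) : list (nat * Z * Z * Z) :=
  match m with
  | O => tabulate (profile 3)
  | S m => let t := profile_table m in tabulate (transfer (lookup 0 t))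
  end.

Lemma lookup_profile_table m k u r :
  small_state k u r -> lookup 0 (profile_table m) k u r = profile (m + 3) k u r.
Proof.
  revert k u r; induction m as [|m IH]; intros k u r Hv; cbn [profile_table];
    rewrite lookup_tabulate by easy; [reflexivity|].
  destruct Hv as (Hk & Hu & Hr); change (S m + 3)%nat with (S (m + 3)); rewrite profile_succ by lia.
  apply transfer_ext; [|easy]; intros; now apply IH.
Qed.

(* Coefficients, in the binomial basis [binom t d], of the polynomials
   [t |-> profile (t + 8) k u r]; unlisted small_state states have zero profile. *)
Definition coefficients : list (nat * Z * Z * list Z) := [
  (0%nat, 0, 0, [1]); (1%nat, 0, -5, [1]); (1%nat, 0, -3, [1]);
  (1%nat, 0, 3, [1]); (1%nat, 0, 5, [1]); (2%nat, -1, -2, [1]);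
  (2%nat, 0, -4, [2]); (2%nat, 0, -2, [2]); (2%nat, 0, 0, [16; 2]);
  (2%nat, 0, 2, [2]); (2%nat, 0, 4, [2]); (2%nat, 1, 2, [1]);
  (3%nat, -1, -3, [3]); (3%nat, -1, 1, [3]); (3%nat, -1, 3, [3]);
  (3%nat, 0, -3, [54; 6]); (3%nat, 0, -1, [27; 3]); (3%nat, 0, 1, [27; 3]);
  (3%nat, 0, 3, [54; 6]); (3%nat, 1, -3, [3]); (3%nat, 1, -1, [3]);
  (3%nat, 1, 3, [3]); (4%nat, -1, -2, [88; 12]); (4%nat, -1, 0, [24]);
  (4%nat, -1, 2, [24]); (4%nat, 0, -2, [352; 48]); (4%nat, 0, 0, [776; 198; 24]);
  (4%nat, 0, 2, [352; 48]); (4%nat, 1, -2, [24]); (4%nat, 1, 0, [24]);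
  (4%nat, 1, 2, [88; 12]); (5%nat, -2, -1, [5]); (5%nat, -2, 1, [5]);
  (5%nat, -1, -1, [375; 30]); (5%nat, -1, 1, [625; 60]); (5%nat, 0, -1, [4670; 1130; 120]);
  (5%nat, 0, 1, [4670; 1130; 120]); (5%nat, 1, -1, [625; 60]); (5%nat, 1, 1, [375; 30]);
  (5%nat, 2, -1, [5]); (5%nat, 2, 1, [5]); (6%nat, -2, 0, [90]);
  (6%nat, -1, 0, [8400; 1080]); (6%nat, 0, 0, [79540; 29240; 6480; 720]);
  (6%nat, 1, 0, [8400; 1080]); (6%nat, 2, 0, [90])].

Definition coef (d k : nat) (u r : Z) : Z := nth d (lookup [] coefficients k u r) 0.

Definition profile_poly (t k : nat) (u r : Z) : Z := zsum (fun d => binom t d * coef d k u r) 4.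

Lemma profile_8 k u r : small_state k u r -> profile 8 k u r = coef 0 k u r.
Proof.
  intros Hv; rewrite <- (lookup_profile_table 5) by easy; apply Z.eqb_eq.
  assert (H : let t := profile_table 5 in
              all_states (fun k u r => lookup 0 t k u r =? coef 0 k u r) = true)
    by now vm_compute.
  exact (all_states_spec _ _ _ _ H Hv).
Qed.

Lemma transfer_coef d k u r :
  (d < 4)%nat -> small_state k u r -> transfer (coef d) k u r = coef d k u r + coef (S d) k u r.
Proof.
  intros Hd Hv; apply Z.eqb_eq.
  assert (H : all_states (fun k u r =>
    forallb (fun d => transfer (coef d) k u r =? coef d k u r + coef (S d) k u r) (seq 0 4)) = true)
    by now vm_compute.
  apply all_states_spec with (k := k) (u := u) (r := r) in H; [|easy].
  rewrite forallb_forall in H; apply H, in_seq; lia.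
Qed.

Lemma coef_4 k u r : small_state k u r -> coef 4 k u r = 0.
Proof.
  intros Hv; apply Z.eqb_eq; revert Hv; apply (all_states_spec (fun k u r => coef 4 k u r =? 0)).
  now vm_compute.
Qed.

Lemma profile_polynomial t k u r :
  small_state k u r -> profile (t + 8) k u r = profile_poly t k u r.
Proof.
  revert k u r; induction t as [|t IH]; intros k u r Hv.
  - rewrite profile_8 by easy; unfold profile_poly; cbn [zsum binom]; ring.
  - pose proof Hv as (Hk & Hu & Hr); cbn [Nat.add]; rewrite profile_succ by lia.
    rewrite (transfer_ext _ (profile_poly t)) by (easy || now intros; apply IH).
    unfold profile_poly; rewrite transfer_linear, zsum_pascal.
    rewrite (zsum_ext _ (fun d => binom t d * coef d k u r + binom t d * coef (S d) k u r))
      by (intros; rewrite transfer_coef by easy; ring).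
    rewrite zsum_add; f_equal; cbn [zsum]; rewrite coef_4 by easy; ring.
Qed.

Lemma walks_profile_table n k :
  (3 <= n)%nat -> (k <= 6)%nat -> walks n k 0 = lookup 0 (profile_table (n - 3)) k 0 0.
Proof.
  intros Hn Hk; rewrite lookup_profile_table by (repeat split; cbn; lia).
  now replace (n - 3 + 3)%nat with n by lia.
Qed.

Lemma walks_polynomial n k :
  (8 <= n)%nat -> (k <= 6)%nat -> walks n k 0 = profile_poly (n - 8) k 0 0.
Proof.
  intros Hn Hk; rewrite <- profile_polynomial by (repeat split; cbn; lia).
  now replace (n - 8 + 8)%nat with n by lia.
Qed.

Lemma binom_1 t : binom t 1 = Z.of_nat t.
Proof. induction t as [|t IH]; [reflexivity|]; cbn [binom]; rewrite binom_0_r, IH; lia. Qed.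

Lemma binom_2 t : 2 * binom t 2 = Z.of_nat t * (Z.of_nat t - 1).
Proof. induction t as [|t IH]; [reflexivity|]; cbn [binom]; rewrite binom_1; lia. Qed.

Lemma binom_3 t : 6 * binom t 3 = Z.of_nat t * (Z.of_nat t - 1) * (Z.of_nat t - 2).
Proof. induction t as [|t IH]; [reflexivity|]; cbn [binom]; pose proof (binom_2 t); lia. Qed.

Lemma walks_2 n : (1 <= n)%nat -> walks n 2 0 = 2 * Z.of_nat n.
Proof.
  intros Hn; destruct (Nat.lt_ge_cases n 8) as [Hsmall|Hlarge].
  - do 8 (destruct n as [|n]; [lia || now vm_compute|]); lia.
  - rewrite walks_polynomial by lia; unfold profile_poly, coef; cbn [zsum]; simpl lookup; simpl nth.
    rewrite binom_0_r, binom_1; lia.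
Qed.

Lemma walks_4 n : (4 <= n)%nat -> walks n 4 0 = 12 * Z.of_nat n ^ 2 - 6 * Z.of_nat n + 56.
Proof.
  intros Hn; destruct (Nat.lt_ge_cases n 8) as [Hsmall|Hlarge].
  - do 8 (destruct n as [|n]; [lia || now vm_compute|]); lia.
  - rewrite walks_polynomial by lia; unfold profile_poly, coef; cbn [zsum]; simpl lookup; simpl nth.
    rewrite binom_0_r, binom_1; pose proof (binom_2 (n - 8)).
    rewrite Nat2Z.inj_sub in * by lia; nia.
Qed.

Lemma walks_6 n : (7 <= n)%nat -> walks n 6 0 = 120 * Z.of_nat n ^ 3 + 3200 * Z.of_nat n - 7500.
Proof.
  intros Hn; destruct (Nat.eq_dec n 7) as [->|Hn'].
  - rewrite walks_profile_table by lia; now vm_compute.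
  - rewrite walks_polynomial by lia; unfold profile_poly, coef; cbn [zsum]; simpl lookup; simpl nth.
    rewrite binom_0_r, binom_1; pose proof (binom_2 (n - 8)); pose proof (binom_3 (n - 8)).
    rewrite Nat2Z.inj_sub in * by lia; nia.
Qed.

End Counting.

Definition Ck (k : nat) (f : R -> R) : Prop := forall j x, (j <= k)%nat -> ex_derive_n f j x.

Definition smooth (f : R -> R) : Prop := forall k, Ck k f.

Lemma Derive_n_succ f k x : Derive_n f (S k) x = Derive_n (Derive f) k x.
Proof. replace (S k) with (k + 1)%nat by lia; now rewrite <- (Derive_n_comp f k 1). Qed.

Lemma Ck_succ k f : Ck (S k) f <-> (forall x, ex_derive f x) /\ Ck k (Derive f).
Proof.
  split.
  - intros H; split; [intros x; exact (H 1%nat x ltac:(lia))|].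
    intros [|j] x Hj; [exact I|].
    apply (ex_derive_ext (Derive_n f (S j))); [intros; apply Derive_n_succ|].
    exact (H (S (S j)) x ltac:(lia)).
  - intros [H1 H2] [|[|j]] x Hj; [exact I|apply H1|].
    apply (ex_derive_ext (Derive_n (Derive f) j)); [intros; symmetry; apply Derive_n_succ|].
    exact (H2 (S j) x ltac:(lia)).
Qed.

Lemma Ck_ext k f g : (forall x, f x = g x) -> Ck k f -> Ck k g.
Proof. intros E H j x Hj; apply (ex_derive_n_ext f); auto. Qed.

Lemma Ck_succ_le k f : Ck (S k) f -> Ck k f.
Proof. intros H j x Hj; apply H; lia. Qed.

Lemma Ck_plus k f g : Ck k f -> Ck k g -> Ck k (fun x => f x + g x).
Proof.
  intros Hf Hg j x Hj; apply ex_derive_n_plus; apply filter_forall; intros y i Hi;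
    [apply Hf|apply Hg]; lia.
Qed.

Lemma Ck_scal k a f : Ck k f -> Ck k (fun x => a * f x).
Proof. intros Hf j x Hj; apply ex_derive_n_scal_l, Hf, Hj. Qed.

Lemma Ck_mult k f g : Ck k f -> Ck k g -> Ck k (fun x => f x * g x).
Proof.
  revert f g; induction k as [|k IH]; intros f g Hf Hg.
  - intros j x Hj; replace j with 0%nat by lia; exact I.
  - apply Ck_succ in Hf as Hf'; apply Ck_succ in Hg as Hg'.
    destruct Hf' as [Df Hf']; destruct Hg' as [Dg Hg'].
    apply Ck_succ; split; [intros; apply ex_derive_mult; auto|].
    apply (Ck_ext _ (fun x => Derive f x * g x + f x * Derive g x)).
    + intros; symmetry; apply Derive_mult; auto.
    + apply Ck_plus; apply IH; auto using Ck_succ_le.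
Qed.

Lemma Ck_inv k f : Ck k f -> (forall x, f x <> 0) -> Ck k (fun x => / f x).
Proof.
  intros Hf Hnz; induction k as [|k IH].
  - intros j x Hj; replace j with 0%nat by lia; exact I.
  - apply Ck_succ in Hf as Hf'; destruct Hf' as [Df Hf'].
    assert (D : forall x, is_derive (fun y => / f y) x ((-1) * (Derive f x * (/ f x * / f x)))).
    { intros x; replace ((-1) * (Derive f x * (/ f x * / f x))) with (- Derive f x / f x ^ 2)
        by (field; auto).
      apply is_derive_inv; auto; apply Derive_correct, Df. }
    apply Ck_succ; split; [intros x; eexists; apply D|].
    apply (Ck_ext _ (fun x => (-1) * (Derive f x * (/ f x * / f x)))).
    + intros x; symmetry; apply is_derive_unique, D.
    + apply Ck_scal, Ck_mult, Ck_mult; auto using Ck_succ_le.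
Qed.

Lemma smooth_Derive f : smooth f -> smooth (Derive f).
Proof. intros H k; apply Ck_succ, H. Qed.

Lemma smooth_ex_derive f x : smooth f -> ex_derive f x.
Proof. intros H; apply (Ck_succ 0 f), H. Qed.

Lemma smooth_mult f g : smooth f -> smooth g -> smooth (fun x => f x * g x).
Proof. intros Hf Hg k; apply Ck_mult; auto. Qed.

Lemma smooth_inv f : smooth f -> (forall x, f x <> 0) -> smooth (fun x => / f x).
Proof. intros Hf Hnz k; apply Ck_inv; auto. Qed.

Lemma smooth_locally f k x :
  smooth f -> locally x (fun y => forall j, (j <= k)%nat -> ex_derive_n f j y).
Proof. intros H; apply filter_forall; intros y j Hj; now apply (H k). Qed.

Lemma Derive_n_mult f g k x : smooth f -> smooth g ->
  Derive_n (fun y => f y * g y) k x =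
  sum_f_R0 (fun j => IZR (binom k j) * Derive_n f j x * Derive_n g (k - j) x) k.
Proof.
  revert f g; induction k as [|k IH]; intros f g Hf Hg; [cbn; ring|].
  rewrite Derive_n_succ.
  rewrite (Derive_n_ext _ (fun y => Derive f y * g y + f y * Derive g y))
    by (intros; apply Derive_mult; now apply smooth_ex_derive).
  rewrite Derive_n_plus by (apply smooth_locally, smooth_mult; auto using smooth_Derive).
  rewrite !IH by auto using smooth_Derive.
  rewrite (sum_eq (fun j => IZR (binom (S k) j) * Derive_n f j x * Derive_n g (S k - j) x)
    (fun j => IZR (binom (S k) j) * (Derive_n f j x * Derive_n g (S k - j) x))) by (intros; ring).
  rewrite <- sum_f_R0_pascal_row, <- plus_sum; apply sum_eq; intros j Hj.
  rewrite <- !Derive_n_succ; replace (S k - j)%nat with (S (k - j)) by lia; cbn [Nat.sub]; ring.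
Qed.

Section DerivativeSequence.

Variable F : nat -> R -> R.
Hypothesis F_derive : forall k t, is_derive (F k) t (F (S k) t).

Lemma Derive_n_sequence k j t : Derive_n (F j) k t = F (k + j)%nat t.
Proof.
  revert t; induction k as [|k IH]; intros t; [reflexivity|]; cbn [Derive_n].
  rewrite (Derive_ext _ (F (k + j)%nat)) by auto; apply is_derive_unique, F_derive.
Qed.

Lemma smooth_sequence j : smooth (F j).
Proof.
  intros k [|i] t _; [exact I|]; cbn [ex_derive_n].
  apply (ex_derive_ext (F (i + j)%nat)); [intros; symmetry; apply Derive_n_sequence|].
  eexists; apply F_derive.
Qed.

End DerivativeSequence.

Lemma moment_cumulant_recursion M k x : smooth M -> (forall t, 0 < M t) ->
  Derive_n M (S k) x =
  sum_f_R0 (fun j =>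
    IZR (binom k j) * Derive_n M j x * Derive_n (fun t => ln (M t)) (S (k - j)) x) k.
Proof.
  intros HM Hpos; set (g t := Derive M t * / M t).
  assert (Dg : forall t, Derive (fun t => ln (M t)) t = g t).
  { intros t; apply is_derive_unique, (is_derive_comp ln M t (/ M t) (Derive M t)).
    - apply is_derive_ln, Hpos.
    - apply Derive_correct, smooth_ex_derive, HM. }
  rewrite Derive_n_succ, (Derive_n_ext _ (fun t => M t * g t))
    by (intros t; unfold g; field; apply Rgt_not_eq, Hpos).
  rewrite Derive_n_mult; [|easy|].
  - apply sum_eq; intros j _.
    now rewrite Derive_n_succ, (Derive_n_ext (Derive (fun t => ln (M t))) g).
  - apply smooth_mult, smooth_inv; auto using smooth_Derive; intros t; apply Rgt_not_eq, Hpos.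
Qed.

Lemma sum_f_R0_first f k : (forall j, (1 <= j <= k)%nat -> f j = 0) -> sum_f_R0 f k = f 0%nat.
Proof.
  induction k as [|k IH]; intros H; [reflexivity|]; cbn [sum_f_R0].
  rewrite IH, (H (S k)) by (lia || intros; apply H; lia); ring.
Qed.

Section MomentsToCumulants.

Variables mu kap : nat -> R.
Hypothesis mu_0 : mu 0%nat = 1.
Hypothesis mu_odd : forall k, Nat.odd k = true -> mu k = 0.
Hypothesis mu_succ :
  forall k, mu (S k) = sum_f_R0 (fun j => IZR (binom k j) * mu j * kap (S (k - j))) k.

Lemma cumulant_odd m : Nat.odd m = true -> kap m = 0.
Proof.
  intros Hm; apply Nat.odd_spec in Hm as [q ->]; rewrite Nat.add_1_r.
  induction q as [q IH] using (well_founded_induction lt_wf).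
  pose proof (mu_succ (2 * q)) as E.
  rewrite mu_odd in E by (apply Nat.odd_spec; exists q; lia).
  rewrite sum_f_R0_first in E.
  - rewrite binom_0_r, mu_0, Nat.sub_0_r in E; lra.
  - intros j Hj; destruct (Nat.Even_or_Odd j) as [[p Hp]|Hodd].
    + replace (2 * q - j)%nat with (2 * (q - p))%nat by lia; rewrite IH by lia; ring.
    + rewrite mu_odd by (now apply Nat.odd_spec); ring.
Qed.

Lemma cumulant_2 : kap 2%nat = mu 2%nat.
Proof.
  rewrite (mu_succ 1); cbn -[IZR]; rewrite mu_0, (mu_odd 1) by reflexivity; ring.
Qed.

Lemma cumulant_4 : kap 4%nat = mu 4%nat - 3 * mu 2%nat ^ 2.
Proof.
  rewrite (mu_succ 3); cbn -[IZR].
  rewrite mu_0, (mu_odd 1), (mu_odd 3), cumulant_2 by reflexivity; ring.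
Qed.

Lemma cumulant_6 : kap 6%nat = mu 6%nat - 15 * mu 4%nat * mu 2%nat + 30 * mu 2%nat ^ 3.
Proof.
  rewrite (mu_succ 5); cbn -[IZR].
  rewrite mu_0, (mu_odd 1), (mu_odd 3), (mu_odd 5), cumulant_4, cumulant_2 by reflexivity; ring.
Qed.

End MomentsToCumulants.

Section PowExp.

Variable g : R -> R.
Hypothesis g_cont : forall v, continuous g v.

Lemma continuous_pow_exp m y v : continuous (fun v => g v ^ m * exp (y * g v)) v.
Proof.
  apply (continuous_mult (fun v => g v ^ m) (fun v => exp (y * g v))).
  - induction m as [|m IH]; [apply continuous_const|].
    apply (continuous_mult g (fun v => g v ^ m)); auto.
  - apply continuous_exp_comp, (continuous_mult (fun _ => y) g); auto using continuous_const.
Qed.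

Lemma continuity_2d_pt_pow_exp m u v : continuity_2d_pt (fun u v => g v ^ m * exp (u * g v)) u v.
Proof.
  assert (Hg : continuity_2d_pt (fun _ v => g v) u v).
  { apply (continuity_1d_2d_pt_comp g (fun _ v => v)); [|apply continuity_2d_pt_id2].
    apply continuity_pt_filterlim, g_cont. }
  apply continuity_2d_pt_mult.
  - induction m as [|m IH]; [exact (continuity_2d_pt_const u v 1)|].
    now apply (continuity_2d_pt_mult (fun _ v => g v) (fun _ v => g v ^ m)).
  - apply (continuity_1d_2d_pt_comp exp (fun u v => u * g v)).
    + apply continuity_pt_filterlim, continuous_exp.
    + apply continuity_2d_pt_mult; [apply continuity_2d_pt_id1|exact Hg].
Qed.

Lemma is_derive_RInt_pow_exp (a b t : R) (k : nat) :
  is_derive (fun s => RInt (fun v => g v ^ k * exp (s * g v)) a b) t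
    (RInt (fun v => g v ^ S k * exp (t * g v)) a b).
Proof.
  assert (D : forall u v, Derive (fun z => g v ^ k * exp (z * g v)) u = g v ^ S k * exp (u * g v)).
  { intros; apply is_derive_unique; auto_derive; [exact I|]; cbn; ring. }
  replace (RInt (fun v => g v ^ S k * exp (t * g v)) a b)
    with (RInt (fun v => Derive (fun u => g v ^ k * exp (u * g v)) t) a b)
    by (apply RInt_ext; intros; apply D).
  apply is_derive_RInt_param.
  - apply filter_forall; intros; auto_derive; exact I.
  - intros v _; apply (continuity_2d_pt_ext (fun u v => g v ^ S k * exp (u * g v))).
    + intros; symmetry; apply D.
    + apply continuity_2d_pt_pow_exp.
  - apply filter_forall; intros y; apply (ex_RInt_continuous (V := R_CompleteNormedModule)).
    intros; apply continuous_pow_exp.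
Qed.

End PowExp.

(* Imported only now because [Defs.S] shadows the successor of [nat]. *)
Import Defs.

Lemma a_aZ k : a k = IZR (aZ k).
Proof. unfold a, aZ; now rewrite plus_IZR, <- pow_IZR. Qed.

Lemma ex_derive_S n w : ex_derive (S n) w.
Proof.
  revert w; induction n as [|n IH]; intros w; [apply ex_derive_const|].
  apply (ex_derive_plus (S n) (fun w => cos (2 * PI * a (Datatypes.S n) * w))); [apply IH|].
  auto_derive; exact I.
Qed.

Lemma continuous_S n w : continuous (S n) w.
Proof. apply (ex_derive_continuous (S n)), ex_derive_S. Qed.

Lemma is_RInt_ext_eq (f g : R -> R) a b l l' :
  is_RInt f a b l -> (forall x, f x = g x) -> l = l' -> is_RInt g a b l'.
Proof. intros H E <-; apply (is_RInt_ext f); auto. Qed.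

Lemma is_RInt_cos_int (c : Z) :
  is_RInt (fun w => cos (2 * PI * IZR c * w)) 0 1 (if (c =? 0)%Z then 1 else 0).
Proof.
  destruct (Z.eqb_spec c 0) as [->|Hc].
  - apply (is_RInt_ext_eq (fun _ => 1) _ _ _ _ _ (is_RInt_const 0 1 1)).
    + intros w; now rewrite Rmult_0_r, Rmult_0_l, cos_0.
    + change ((1 - 0) * 1 = 1); ring.
  - assert (Hc' : IZR c <> 0) by now apply not_0_IZR.
    pose proof PI_RGT_0.
    set (F w := sin (2 * PI * IZR c * w) / (2 * PI * IZR c)).
    apply (is_RInt_ext_eq (fun w => cos (2 * PI * IZR c * w)) _ _ _ (minus (F 1) (F 0))).
    + apply (is_RInt_derive (V := R_CompleteNormedModule)); intros w _.
      * unfold F; auto_derive; [exact I|]; field; split; lra.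
      * apply (ex_derive_continuous (fun w => cos (2 * PI * IZR c * w))); auto_derive; exact I.
    + reflexivity.
    + change (F 1 - F 0 = 0); unfold F.
      rewrite Rmult_0_r, sin_0, Rmult_1_r, (sin_eq_0_1 (2 * PI * IZR c)); [field; split; lra|].
      exists (2 * c)%Z; rewrite mult_IZR; ring.
Qed.

Lemma is_RInt_cos_S_step_sum n k m (c : Z) :
  (forall c,
     is_RInt (fun w => cos (2 * PI * IZR c * w) * S n w ^ k) 0 1 (IZR (walks n k c) / 2 ^ k)) ->
  is_RInt (fun w => cos (2 * PI * IZR c * w) * S m w * S n w ^ k) 0 1
    (IZR (step_sum m (walks n k) c) / 2 ^ Datatypes.S k).
Proof.
  intros Hk; induction m as [|m IH].
  - apply (is_RInt_ext_eq (fun _ => 0) _ _ _ _ _ (is_RInt_const 0 1 0)).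
    + intros w; cbn; ring.
    + change ((1 - 0) * 0 = IZR 0 / 2 ^ Datatypes.S k); field; apply pow_nonzero; lra.
  - set (x := aZ (Datatypes.S m)).
    apply (is_RInt_ext_eq _ _ _ _ _ _ (is_RInt_plus _ _ _ _ _ _ IH (is_RInt_scal _ _ _ (/ 2) _
             (is_RInt_plus _ _ _ _ _ _ (Hk (c + x)%Z) (Hk (c - x)%Z))))).
    + intros w; cbv beta.
      change (S (Datatypes.S m) w) with (S m w + cos (2 * PI * a (Datatypes.S m) * w)).
      repeat change (plus ?u ?v) with (u + v); change (scal ?u ?v) with (u * v).
      rewrite a_aZ, plus_IZR, minus_IZR; fold x.
      replace (2 * PI * (IZR c + IZR x) * w) with (2 * PI * IZR c * w + 2 * PI * IZR x * w) by ring.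
      replace (2 * PI * (IZR c - IZR x) * w) with (2 * PI * IZR c * w - 2 * PI * IZR x * w) by ring.
      rewrite cos_plus, cos_minus; field.
    + change (IZR (step_sum m (walks n k) c) / 2 ^ Datatypes.S k +
        / 2 * (IZR (walks n k (c + x)) / 2 ^ k + IZR (walks n k (c - x)) / 2 ^ k) =
        IZR (step_sum (Datatypes.S m) (walks n k) c) / 2 ^ Datatypes.S k).
      unfold step_sum at 2; cbn [zsum]; fold x (step_sum m (walks n k) c).
      rewrite !plus_IZR; cbn [pow]; field; apply pow_nonzero; lra.
Qed.

Lemma is_RInt_cos_S_pow n k (c : Z) :
  is_RInt (fun w => cos (2 * PI * IZR c * w) * S n w ^ k) 0 1 (IZR (walks n k c) / 2 ^ k).
Proof.
  revert c; induction k as [|k IH]; intros c.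
  - apply (is_RInt_ext_eq _ _ _ _ _ _ (is_RInt_cos_int c)).
    + intros w; cbn; ring.
    + cbn [walks]; destruct (c =? 0)%Z; cbn; field.
  - apply (is_RInt_ext_eq _ _ _ _ _ _ (is_RInt_cos_S_step_sum n k n c IH)); [intros w; cbn; ring|].
    reflexivity.
Qed.

Definition mgf_deriv (n k : nat) (t : R) : R := RInt (fun w => S n w ^ k * exp (t * S n w)) 0 1.

Lemma is_derive_mgf_deriv n k t : is_derive (mgf_deriv n k) t (mgf_deriv n (Datatypes.S k) t).
Proof. apply is_derive_RInt_pow_exp, continuous_S. Qed.

Lemma mgf_mgf_deriv n t : mgf n t = mgf_deriv n 0 t.
Proof. apply RInt_ext; intros; cbn; ring. Qed.

Lemma mgf_pos n t : 0 < mgf n t.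
Proof.
  apply RInt_gt_0; [lra|intros; apply exp_pos|intros w _].
  apply (continuous_exp_comp (fun w => t * S n w)), (continuous_mult (fun _ => t) (S n)).
  - apply continuous_const.
  - apply continuous_S.
Qed.

Lemma smooth_mgf n : smooth (mgf n).
Proof.
  intros k; apply (Ck_ext _ (mgf_deriv n 0)); [intros; symmetry; apply mgf_mgf_deriv|].
  apply (smooth_sequence (mgf_deriv n)), is_derive_mgf_deriv.
Qed.

Lemma Derive_n_mgf_walks n k : Derive_n (mgf n) k 0 = IZR (walks n k 0) / 2 ^ k.
Proof.
  rewrite (Derive_n_ext _ (mgf_deriv n 0)) by apply mgf_mgf_deriv.
  rewrite (Derive_n_sequence (mgf_deriv n) (is_derive_mgf_deriv n)), Nat.add_0_r.
  apply is_RInt_unique, (is_RInt_ext_eq _ _ _ _ _ _ (is_RInt_cos_S_pow n k 0)); [|reflexivity].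
  intros w; cbv beta; rewrite Rmult_0_r, Rmult_0_l, cos_0, Rmult_0_l, exp_0; ring.
Qed.

Lemma Derive_n_mgf_succ n k :
  Derive_n (mgf n) (Datatypes.S k) 0 =
  sum_f_R0 (fun j => IZR (binom k j) * Derive_n (mgf n) j 0 * kappa (Datatypes.S (k - j)) n) k.
Proof. apply moment_cumulant_recursion; [apply smooth_mgf|apply mgf_pos]. Qed.

Lemma Derive_n_mgf_odd n k : Nat.odd k = true -> Derive_n (mgf n) k 0 = 0.
Proof.
  intros Hk; rewrite Derive_n_mgf_walks, walks_odd; [unfold Rdiv; ring|].
  apply Nat.odd_spec in Hk as [q ->]; exists (Z.of_nat q); lia.
Qed.

Lemma Derive_n_mgf_zero n : Derive_n (mgf n) 0 0 = 1.
Proof. rewrite Derive_n_mgf_walks; cbn; field. Qed.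

Lemma cumulants_mgf n :
  (forall m, Nat.odd m = true -> kappa m n = 0) /\
  kappa 2 n = Derive_n (mgf n) 2 0 /\
  kappa 4 n = Derive_n (mgf n) 4 0 - 3 * Derive_n (mgf n) 2 0 ^ 2 /\
  kappa 6 n = Derive_n (mgf n) 6 0 - 15 * Derive_n (mgf n) 4 0 * Derive_n (mgf n) 2 0
              + 30 * Derive_n (mgf n) 2 0 ^ 3.
Proof.
  pose proof (Derive_n_mgf_zero n); pose proof (Derive_n_mgf_odd n).
  pose proof (Derive_n_mgf_succ n).
  set (mu k := Derive_n (mgf n) k 0); set (kap m := kappa m n).
  repeat split;
    [intros m; apply (cumulant_odd mu kap)|apply (cumulant_2 mu kap)|apply (cumulant_4 mu kap)|
     apply (cumulant_6 mu kap)]; auto.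
Qed.

Theorem theoremB :
  (forall m n : nat, (1 <= n)%nat -> Nat.odd m = true -> kappa m n = 0) /\
  (forall n : nat, (1 <= n)%nat -> kappa 2 n = INR n / 2) /\
  (forall n : nat, (4 <= n)%nat -> kappa 4 n = (- 3 * INR n + 28) / 8) /\
  (forall n : nat, (7 <= n)%nat ->
     kappa 6 n = (45 * INR n ^ 2 + 380 * INR n - 1875) / 16).
Proof.
  split; [|split; [|split]].
  - intros m n _; apply cumulants_mgf.
  - intros n Hn; destruct (cumulants_mgf n) as (_ & -> & _).
    rewrite Derive_n_mgf_walks, walks_2 by lia.
    rewrite mult_IZR, <- INR_IZR_INZ; field.
  - intros n Hn; destruct (cumulants_mgf n) as (_ & _ & -> & _).
    rewrite !Derive_n_mgf_walks, walks_2, walks_4 by lia.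
    repeat (rewrite plus_IZR || rewrite minus_IZR || rewrite mult_IZR).
    rewrite <- (pow_IZR _ 2), <- INR_IZR_INZ; field.
  - intros n Hn; destruct (cumulants_mgf n) as (_ & _ & _ & ->).
    rewrite !Derive_n_mgf_walks, walks_2, walks_4, walks_6 by lia.
    repeat (rewrite plus_IZR || rewrite minus_IZR || rewrite mult_IZR).
    rewrite <- (pow_IZR _ 2), <- (pow_IZR _ 3), <- INR_IZR_INZ; field.
Qed.
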